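(* Let $(X,d)$ be a Hadamard space, $\|\cdot\|$ a norm on $\mathbb R^s$, and $f:\mathbb R^s\to X$ Lipschitz with constant $C>0$, i.e. $d(f(t),f(u))\le C\|t-u\|$. Let $S$ be the barycentric scheme on $X$ of a mask $\mathbf a$ with $\operatorname{supp}(\mathbf a)\subseteq\{v\in\mathbb R^s:\|v\|\le r\}$, and suppose $S$ is convergent. For $h>0$ let $x_i=f(hi)$, $i\in\mathbb Z^s$ (assume $x$ bounded). Then $$\sup_{t\in\mathbb R^s}d\big(S^\infty x(t/h),f(t)\big)\le rCh.$$
   Context: Hadamard space: complete metric space $(X,d)$ such that for any $x_0,x_1\in X$ there is $y$ with $d(z,y)^2\le\frac12d(z,x_0)^2+\frac12d(z,x_1)^2-\frac14d(x_0,x_1)^2$ for all $z$. Mask: finitely supported nonnegative $(a_i)_{i\in\mathbb Z^s}$ with $\sum_ja_{i-2j}=1$ for all $i$. Barycentric scheme: $Sx_i=\operatorname{argmin}_{y\in X}\sum_ja_{i-2j}d^2(x_j,y)$. $S$ convergent means: for every bounded $x$ there is a continuous $S^\infty x:\mathbb R^s\to X$ with $\sup_jd(S^\infty x(j/2^n),(S^nx)_j)\to0$ as $n\to\infty$. *)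

From Stdlib Require Import Reals Lra ZArith List.
From Stdlib Require Fin.
Open Scope R_scope.

Definition Rs (s : nat) := Fin.t s -> R.
Definition Zs (s : nat) := Fin.t s -> Z.

Definition is_metric {X : Type} (d : X -> X -> R) : Prop :=
  (forall x y, d x y = 0 <-> x = y) /\
  (forall x y, d x y = d y x) /\
  (forall x y z, d x z <= d x y + d y z).

Definition cauchy_seq {X : Type} (d : X -> X -> R) (u : nat -> X) : Prop :=
  forall eps, 0 < eps -> exists N, forall m n, (N <= m)%nat -> (N <= n)%nat ->
    d (u m) (u n) < eps.

Definition seq_converges_to {X : Type} (d : X -> X -> R) (u : nat -> X) (l : X) : Prop :=
  forall eps, 0 < eps -> exists N, forall n, (N <= n)%nat -> d (u n) l < eps.

Definition complete {X : Type} (d : X -> X -> R) : Prop :=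
  forall u, cauchy_seq d u -> exists l, seq_converges_to d u l.

(* Hadamard space: complete metric space with the midpoint (CAT(0)) inequality. *)
Definition hadamard_space {X : Type} (d : X -> X -> R) : Prop :=
  is_metric d /\ complete d /\
  forall x0 x1 : X, exists y : X, forall z : X,
    (d z y)^2 <= / 2 * (d z x0)^2 + / 2 * (d z x1)^2 - / 4 * (d x0 x1)^2.

Definition vsub {s} (t u : Rs s) : Rs s := fun c => t c - u c.
Definition vscal {s} (l : R) (t : Rs s) : Rs s := fun c => l * t c.

Definition is_norm {s : nat} (N : Rs s -> R) : Prop :=
  (forall v, N v = 0 -> forall c, v c = 0) /\
  (forall l v, N (vscal l v) = Rabs l * N v) /\
  (forall v w, N (fun c => v c + w c) <= N v + N w).

Definition zsub2 {s} (i j : Zs s) : Zs s := fun c => (i c - 2 * j c)%Z.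

Definition finitely_supported {s} (a : Zs s -> R) : Prop :=
  exists L : list (Zs s), forall k, a k <> 0 -> In k L.

(* J is a duplicate-free finite list containing every j with a_{i-2j} <> 0;
   sums over such J are the (finite) sums  sum_{j in Z^s} a_{i-2j} G(j). *)
Definition covers {s} (a : Zs s -> R) (i : Zs s) (J : list (Zs s)) : Prop :=
  NoDup J /\ forall j, a (zsub2 i j) <> 0 -> In j J.

Definition wsum {s} (a : Zs s -> R) (i : Zs s) (J : list (Zs s)) (G : Zs s -> R) : R :=
  fold_right Rplus 0 (map (fun j => a (zsub2 i j) * G j) J).

Definition is_mask {s} (a : Zs s -> R) : Prop :=
  finitely_supported a /\ (forall k, 0 <= a k) /\
  forall i J, covers a i J -> wsum a i J (fun _ => 1) = 1.

Definition is_argmin_at {X : Type} (d : X -> X -> R) {s} (a : Zs s -> R)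
    (x : Zs s -> X) (i : Zs s) (y : X) : Prop :=
  forall J, covers a i J -> forall z : X,
    wsum a i J (fun j => (d (x j) y)^2) <= wsum a i J (fun j => (d (x j) z)^2).

Definition bary_step {X : Type} (d : X -> X -> R) {s} (a : Zs s -> R)
    (x y : Zs s -> X) : Prop :=
  forall i, is_argmin_at d a x i (y i).

Definition bary_iterates {X : Type} (d : X -> X -> R) {s} (a : Zs s -> R)
    (x : Zs s -> X) (xs : nat -> Zs s -> X) : Prop :=
  xs O = x /\ forall n, bary_step d a (xs n) (xs (S n)).

Definition bounded_data {X : Type} (d : X -> X -> R) {s} (x : Zs s -> X) : Prop :=
  exists z M, forall j, d (x j) z <= M.

Definition continuous_map {X : Type} (d : X -> X -> R) {s} (g : Rs s -> X) : Prop :=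
  forall t eps, 0 < eps -> exists delta, 0 < delta /\
    forall u, (forall c, Rabs (u c - t c) < delta) -> d (g u) (g t) < eps.

Definition dyadic {s} (n : nat) (j : Zs s) : Rs s := fun c => IZR (j c) / 2 ^ n.

Definition is_limit_function {X : Type} (d : X -> X -> R) {s}
    (xs : nat -> Zs s -> X) (g : Rs s -> X) : Prop :=
  continuous_map d g /\
  forall eps, 0 < eps -> exists N, forall n, (N <= n)%nat ->
    forall j, d (g (dyadic n j)) (xs n j) <= eps.

Definition scheme_convergent {X : Type} (d : X -> X -> R) {s} (a : Zs s -> R) : Prop :=
  forall x xs, bounded_data d x -> bary_iterates d a x xs ->
    exists g, is_limit_function d xs g.

From Stdlib Require Import Reals Lra Lia ZArith List.
From Stdlib Require Fin.
From Stdlib Require Import ClassicalEpsilon FunctionalExtensionality.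
Open Scope R_scope.

(* The proof has three parts.
   1. Barycenters stay in balls: if every x_j with a_{i-2j} <> 0 lies in the
      closed ball B(p, R0), so does (Sx)_i.  The energy at (Sx)_i is compared
      with the energy at the points of the geodesic from (Sx)_i to p with
      dyadic parameter 2^-k, obtained by iterating the midpoint inequality.
   2. Level estimate: by induction on n, d((S^n x)_j, f(hj/2^n)) <= rCh(1-2^-n),
      since a refinement step moves the grid point by at most rh/2^(n+1).
   3. Passage to the limit: S^oo x(t/h) is close to (S^n x)_j for a grid point
      j/2^n close to t/h (continuity and uniform convergence), and f(hj/2^n)
      is close to f(t) because every norm on R^s is dominated by the sup-norm. *)

Section Metric.
Context {X : Type} (d : X -> X -> R) (Hm : is_metric d).

Lemma d_refl x : d x x = 0.
Proof. destruct Hm as [H _]. apply H; reflexivity. Qed.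

Lemma d_sym x y : d x y = d y x.
Proof. destruct Hm as [_ [H _]]. apply H. Qed.

Lemma d_tri x y z : d x z <= d x y + d y z.
Proof. destruct Hm as [_ [_ H]]. apply H. Qed.

Lemma d_nonneg x y : 0 <= d x y.
Proof. pose proof (d_tri x y x) as H. rewrite d_refl, (d_sym y x) in H. lra. Qed.
End Metric.

Lemma le_of_pow2_le u v : 0 <= v -> u ^ 2 <= v ^ 2 -> u <= v.
Proof. intros Hv Huv. destruct (Rle_lt_dec u v) as [|Hlt]; auto. nra. Qed.

Lemma inv_pow2_bounds k : 0 < / 2 ^ k <= 1.
Proof.
  split; [apply Rinv_0_lt_compat, pow_lt; lra|].
  rewrite <- Rinv_1. apply Rinv_le_contravar; [lra|].
  rewrite <- (pow1 k). apply pow_incr. lra.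
Qed.

Lemma inv_pow2_small e : 0 < e -> exists N0, forall n, (N0 <= n)%nat -> / 2 ^ n < e.
Proof.
  intros He.
  assert (Habs : Rabs (/ 2) < 1) by (rewrite Rabs_pos_eq; lra).
  destruct (pow_lt_1_zero (/ 2) Habs e He) as [N0 HN0].
  exists N0. intros n Hn. specialize (HN0 n Hn).
  rewrite pow_inv, Rabs_pos_eq in HN0 by (apply Rlt_le, inv_pow2_bounds). exact HN0.
Qed.

Lemma le_of_dyadic_bounds A B : (forall k, (1 - / 2 ^ k) * A <= B) -> A <= B.
Proof.
  intros Hk. destruct (Rle_lt_dec A B) as [|Hlt]; auto.
  assert (HA : 0 < A) by (specialize (Hk 0%nat); simpl in Hk; rewrite Rinv_1 in Hk; lra).
  destruct (inv_pow2_small ((A - B) / A)) as [N0 HN0]; [apply Rdiv_lt_0_compat; lra|].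
  specialize (HN0 N0 (le_n N0)). specialize (Hk N0).
  apply (Rmult_lt_compat_r A) in HN0; auto.
  unfold Rdiv in HN0. rewrite Rmult_assoc, Rinv_l in HN0 by lra. lra.
Qed.

Section WeightedSums.
Context {s : nat} (a : Zs s -> R) (i : Zs s).

Lemma wsum_mono J G1 G2 : (forall k, 0 <= a k) ->
  (forall j, a (zsub2 i j) <> 0 -> G1 j <= G2 j) -> wsum a i J G1 <= wsum a i J G2.
Proof.
  intros Hpos HG. induction J as [|j J IH]; unfold wsum in *; simpl; [lra|].
  destruct (Req_dec (a (zsub2 i j)) 0) as [E|E].
  - rewrite E. lra.
  - apply Rplus_le_compat; auto. apply Rmult_le_compat_l; auto.
Qed.

Lemma wsum_affine J al be ga G H :
  wsum a i J (fun j => al * G j + be * H j + ga) =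
  al * wsum a i J G + be * wsum a i J H + ga * wsum a i J (fun _ => 1).
Proof. induction J as [|j J IH]; unfold wsum in *; simpl; [ring|]. rewrite IH. ring. Qed.

Lemma wsum_const J c : wsum a i J (fun _ => c) = c * wsum a i J (fun _ => 1).
Proof. induction J as [|j J IH]; unfold wsum in *; simpl; [ring|]. rewrite IH. ring. Qed.

Lemma wsum_nonzero_weight J : wsum a i J (fun _ => 1) <> 0 -> exists j, a (zsub2 i j) <> 0.
Proof.
  induction J as [|j J IH]; unfold wsum in *; simpl; intros Hne; [lra|].
  destruct (Req_dec (a (zsub2 i j)) 0) as [E|E]; [|eauto].
  apply IH. rewrite E in Hne. lra.
Qed.
End WeightedSums.

Lemma mask_cover {s} (a : Zs s -> R) (i : Zs s) : is_mask a ->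
  exists J, covers a i J /\ wsum a i J (fun _ => 1) = 1.
Proof.
  intros [[L HL] [_ Hsum]].
  set (dec := fun x y : Zs s => excluded_middle_informative (x = y)).
  set (half := fun k : Zs s => fun c => ((i c - k c) / 2)%Z).
  assert (HJ : covers a i (nodup dec (map half L))).
  { split; [apply NoDup_nodup|]. intros j Hj. apply nodup_In.
    replace j with (half (zsub2 i j)); [apply in_map; auto|].
    apply functional_extensionality; intro c. unfold half, zsub2.
    replace (i c - (i c - 2 * j c))%Z with (j c * 2)%Z by ring.
    apply Z.div_mul. lia. }
  eauto.
Qed.

Lemma mask_weight {s} (a : Zs s -> R) (i : Zs s) : is_mask a -> exists j, a (zsub2 i j) <> 0.
Proof.
  intros Ha. destruct (mask_cover a i Ha) as [J [_ H1]].
  apply (wsum_nonzero_weight a i J). lra.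
Qed.

(* m is the point at parameter l on the geodesic from y to p, in the sense of
   the CAT(0) comparison inequality for squared distances. *)
Definition geodesic_point {X : Type} (d : X -> X -> R) (l : R) (y p m : X) : Prop :=
  forall z, (d z m) ^ 2 <= (1 - l) * (d z y) ^ 2 + l * (d z p) ^ 2 - l * (1 - l) * (d y p) ^ 2.

Section Hadamard.
Context {X : Type} (d : X -> X -> R) (HX : hadamard_space d).

Let Hm : is_metric d := proj1 HX.

Lemma geodesic_point_dist l y p m :
  0 <= l <= 1 -> geodesic_point d l y p m -> l * d y p <= d y m.
Proof.
  intros Hl Hgeo. set (D := d y p).
  assert (HD : 0 <= D) by apply (d_nonneg d Hm).
  assert (Hpm : d p m <= (1 - l) * D).
  { specialize (Hgeo p). rewrite (d_refl d Hm), (d_sym d Hm p y) in Hgeo. fold D in Hgeo.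
    apply le_of_pow2_le; [nra|]. nra. }
  pose proof (d_tri d Hm y m p) as Htri. rewrite (d_sym d Hm m p) in Htri. fold D in Htri.
  lra.
Qed.

(* Iterated midpoints give the geodesic points at all dyadic parameters 2^-k. *)
Lemma dyadic_geodesic_points y p k : exists m, geodesic_point d (/ 2 ^ k) y p m.
Proof.
  pose proof HX as [_ [_ Hmid]].
  induction k as [|k [m Hmk]].
  - exists p. intro z. simpl. rewrite Rinv_1. lra.
  - set (l := / 2 ^ k) in *.
    pose proof (inv_pow2_bounds k) as Hl. fold l in Hl.
    assert (Hym : (l * d y p) ^ 2 <= (d y m) ^ 2).
    { apply pow_incr. split; [apply Rmult_le_pos; [lra|apply (d_nonneg d Hm)]|].
      apply geodesic_point_dist; [lra|exact Hmk]. }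
    destruct (Hmid y m) as [m' Hm'].
    exists m'. intro z. specialize (Hm' z). specialize (Hmk z).
    replace (/ 2 ^ S k) with (l / 2) by (unfold l; simpl; field; apply pow_nonzero; lra).
    lra.
Qed.

(* Energy comparison: if the data are within R0 of p, the minimizer y of the
   energy beats the geodesic point m, which forces (1-l) d(y,p)^2 <= R0^2. *)
Lemma barycenter_energy_bound {s} (a : Zs s -> R) (Ha : is_mask a) (x : Zs s -> X)
  (i : Zs s) (y p m : X) (R0 l : R) :
  is_argmin_at d a x i y -> (forall j, a (zsub2 i j) <> 0 -> d (x j) p <= R0) ->
  0 < l <= 1 -> geodesic_point d l y p m -> (1 - l) * (d y p) ^ 2 <= R0 ^ 2.
Proof.
  intros Hy Hb Hl Hgeo. pose proof Ha as [_ [Hpos _]].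
  destruct (mask_cover a i Ha) as [J [HJ H1]].
  set (D := d y p). set (F := wsum a i J (fun j => (d (x j) y) ^ 2)).
  destruct (mask_weight a i Ha) as [j0 Hj0].
  assert (HR : 0 <= R0) by (pose proof (Hb j0 Hj0); pose proof (d_nonneg d Hm (x j0) p); lra).
  assert (HF : 0 <= F).
  { assert (H0 : wsum a i J (fun _ => 0) <= F) by (apply wsum_mono; auto; intros; apply pow2_ge_0).
    rewrite wsum_const in H0. lra. }
  assert (HW : wsum a i J (fun j => (d (x j) p) ^ 2) <= R0 ^ 2).
  { rewrite <- (Rmult_1_r (R0 ^ 2)), <- H1, <- wsum_const.
    apply wsum_mono; auto. intros j Hj. apply pow_incr. split; [apply (d_nonneg d Hm)|auto]. }
  assert (Hcmp : F <= (1 - l) * F + l * wsum a i J (fun j => (d (x j) p) ^ 2) - l * (1 - l) * D ^ 2).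
  { eapply Rle_trans; [apply (Hy J HJ m)|].
    replace ((1 - l) * F + l * wsum a i J (fun j => (d (x j) p) ^ 2) - l * (1 - l) * D ^ 2)
      with (wsum a i J (fun j => (1 - l) * (d (x j) y) ^ 2 + l * (d (x j) p) ^ 2
                                 + - (l * (1 - l) * D ^ 2)))
      by (rewrite wsum_affine, H1; fold F; ring).
    apply wsum_mono; [exact Hpos|]. intros j _. specialize (Hgeo (x j)). fold D in Hgeo. lra. }
  assert (Hl0 : l * (F + (1 - l) * D ^ 2 - R0 ^ 2) <= 0) by nra.
  destruct (Rle_lt_dec (F + (1 - l) * D ^ 2 - R0 ^ 2) 0); nra.
Qed.

Lemma barycenter_in_ball {s} (a : Zs s -> R) (Ha : is_mask a) (x : Zs s -> X)
  (i : Zs s) (y p : X) (R0 : R) :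
  is_argmin_at d a x i y ->
  (forall j, a (zsub2 i j) <> 0 -> d (x j) p <= R0) -> d y p <= R0.
Proof.
  intros Hy Hb.
  destruct (mask_weight a i Ha) as [j0 Hj0].
  assert (HR : 0 <= R0) by (pose proof (Hb j0 Hj0); pose proof (d_nonneg d Hm (x j0) p); lra).
  apply le_of_pow2_le; auto.
  apply le_of_dyadic_bounds. intro k.
  destruct (dyadic_geodesic_points y p k) as [m Hgeo].
  eapply barycenter_energy_bound; eauto. apply inv_pow2_bounds.
Qed.
End Hadamard.

(* Every norm on R^s is dominated by a multiple of the sup-norm:
   N(v) <= (sum_c N(e_c)) max_c |v_c|, proved coordinate by coordinate. *)
Section NormBound.
Context {s : nat} (N : Rs s -> R) (HN : is_norm N).

Lemma N_ext v w : (forall c, v c = w c) -> N v = N w.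
Proof. intros H. f_equal. apply functional_extensionality; auto. Qed.

Lemma N_zero : N (fun _ => 0) = 0.
Proof.
  destruct HN as [_ [Hs _]].
  rewrite (N_ext _ (vscal 0 (fun _ => 0))) by (intro; unfold vscal; ring).
  rewrite Hs, Rabs_R0. ring.
Qed.

Lemma N_nonneg v : 0 <= N v.
Proof.
  destruct HN as [_ [Hs Ht]].
  pose proof (Ht v (vscal (- (1)) v)) as H.
  rewrite (N_ext _ (fun _ => 0)) in H by (intro; unfold vscal; ring).
  rewrite N_zero, Hs, Rabs_Ropp, Rabs_R1 in H. lra.
Qed.

Definition unit_vector (c' : Fin.t s) : Rs s := fun c => if Fin.eq_dec c c' then 1 else 0.

Definition restrict (L : list (Fin.t s)) (v : Rs s) : Rs s :=
  fun c => if in_dec Fin.eq_dec c L then v c else 0.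

Definition unit_norms (L : list (Fin.t s)) : R :=
  fold_right (fun c acc => N (unit_vector c) + acc) 0 L.

Lemma restrict_cons_mem c L v : In c L -> restrict (c :: L) v = restrict L v.
Proof.
  intros Hin. apply functional_extensionality; intro c'. unfold restrict.
  destruct (in_dec Fin.eq_dec c' (c :: L)) as [H1|H1];
  destruct (in_dec Fin.eq_dec c' L) as [H2|H2]; auto.
  - destruct H1 as [<-|]; contradiction.
  - exfalso. apply H1. right; auto.
Qed.

Lemma restrict_cons_fresh c L v : ~ In c L ->
  restrict (c :: L) v = (fun c' => restrict L v c' + vscal (v c) (unit_vector c) c').
Proof.
  intros Hnin. apply functional_extensionality; intro c'. unfold restrict, vscal, unit_vector.
  destruct (Fin.eq_dec c' c) as [->|H3].
  - destruct (in_dec Fin.eq_dec c (c :: L)) as [_|H1]; [|exfalso; apply H1; left; auto].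
    destruct (in_dec Fin.eq_dec c L); [contradiction|ring].
  - destruct (in_dec Fin.eq_dec c' (c :: L)) as [[E|H1]|H1]; [congruence| |];
    destruct (in_dec Fin.eq_dec c' L) as [H2|H2]; try ring; exfalso; auto.
    apply H1; right; auto.
Qed.

Lemma N_restrict_bound L v B : 0 <= B -> (forall c, Rabs (v c) <= B) ->
  N (restrict L v) <= B * unit_norms L.
Proof.
  intros HB Hv. destruct HN as [_ [Hs Ht]].
  induction L as [|c L IH]; simpl.
  - rewrite (N_ext _ (fun _ => 0)) by reflexivity. rewrite N_zero. lra.
  - pose proof (N_nonneg (unit_vector c)).
    destruct (in_dec Fin.eq_dec c L) as [Hin|Hnin].
    + rewrite restrict_cons_mem by exact Hin. nra.
    + rewrite restrict_cons_fresh by exact Hnin.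
      eapply Rle_trans; [apply Ht|]. rewrite Hs. pose proof (Hv c). nra.
Qed.

Fixpoint all_fin (n : nat) : list (Fin.t n) :=
  match n with O => nil | S m => Fin.F1 :: map Fin.FS (all_fin m) end.

Lemma all_fin_In n (c : Fin.t n) : In c (all_fin n).
Proof. induction c; simpl; [left; auto|right; apply in_map; auto]. Qed.

Lemma norm_dominated_by_sup : exists K, 0 <= K /\ forall v B, 0 <= B ->
  (forall c, Rabs (v c) <= B) -> N v <= K * B.
Proof.
  exists (unit_norms (all_fin s)). split.
  - induction (all_fin s); simpl; [lra|]. pose proof (N_nonneg (unit_vector a)). lra.
  - intros v B HB Hv. rewrite (N_ext v (restrict (all_fin s) v)).
    + rewrite Rmult_comm. apply N_restrict_bound; auto.
    + intro c. unfold restrict. destruct (in_dec Fin.eq_dec c (all_fin s)) as [|Hn]; auto.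
      exfalso; apply Hn, all_fin_In.
Qed.
End NormBound.

Lemma round_approx q t : 0 < q -> Rabs (IZR (up (q * t) - 1) / q - t) < / q.
Proof.
  intros Hq. destruct (archimed (q * t)) as [A1 A2].
  rewrite minus_IZR.
  replace ((IZR (up (q * t)) - 1) / q - t) with ((IZR (up (q * t)) - 1 - q * t) * / q)
    by (field; lra).
  assert (Hi : 0 < / q) by (apply Rinv_0_lt_compat; auto).
  apply Rabs_def1; nra.
Qed.

Lemma limit_function_near_grid {X : Type} (d : X -> X -> R) (Hm : is_metric d) {s}
  (xs : nat -> Zs s -> X) (g : Rs s -> X) (Hg : is_limit_function d xs g)
  (t0 : Rs s) (eps : R) : 0 < eps ->
  exists N0, forall n, (N0 <= n)%nat -> forall j,
    (forall c, Rabs (IZR (j c) / 2 ^ n - t0 c) < / 2 ^ n) -> d (g t0) (xs n j) <= eps.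
Proof.
  intros Heps. destruct Hg as [Hcont Hlim].
  destruct (Hcont t0 (eps / 2)) as [delta [Hdelta Hc]]; [lra|].
  destruct (inv_pow2_small delta Hdelta) as [N1 HN1].
  destruct (Hlim (eps / 2)) as [N2 HN2]; [lra|].
  exists (Nat.max N1 N2). intros n Hn j Hj.
  assert (Hclose : d (g (dyadic n j)) (g t0) < eps / 2).
  { apply Hc. intro c. specialize (HN1 n ltac:(lia)). specialize (Hj c). unfold dyadic. lra. }
  pose proof (HN2 n ltac:(lia) j).
  pose proof (d_tri d Hm (g t0) (g (dyadic n j)) (xs n j)) as Htri.
  rewrite (d_sym d Hm (g t0) (g (dyadic n j))) in Htri. lra.
Qed.

Definition grid_point {s} (h : R) (n : nat) (j : Zs s) : Rs s :=
  fun c => h * IZR (j c) / 2 ^ n.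

Section SchemeEstimates.
Context {X : Type} (d : X -> X -> R) (HX : hadamard_space d)
  {s : nat} (N : Rs s -> R) (HN : is_norm N) (f : Rs s -> X) (C r h : R)
  (a : Zs s -> R) (HC : 0 < C) (Hf : forall t u, d (f t) (f u) <= C * N (vsub t u))
  (Ha : is_mask a) (Hsupp : forall k, a k <> 0 -> N (fun c => IZR (k c)) <= r) (Hh : 0 < h).

Lemma mask_radius_nonneg : 0 <= r.
Proof.
  destruct (mask_weight a (fun _ => 0%Z) Ha) as [j0 Hj0].
  pose proof (Hsupp _ Hj0). pose proof (N_nonneg N HN (fun c => IZR (zsub2 (fun _ => 0%Z) j0 c))).
  lra.
Qed.

(* A grid point j at level n contributing to i at level n+1 lies within
   r h 2^-(n+1) of it, so their images under f are C r h 2^-(n+1) apart. *)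
Lemma grid_step_distance n i j : a (zsub2 i j) <> 0 ->
  d (f (grid_point h n j)) (f (grid_point h (S n) i)) <= r * C * h * / 2 ^ S n.
Proof.
  intros Hj. eapply Rle_trans; [apply Hf|].
  replace (r * C * h * / 2 ^ S n) with (C * (r * (h / 2 ^ S n))) by (unfold Rdiv; ring).
  apply Rmult_le_compat_l; [lra|].
  pose proof (inv_pow2_bounds (S n)) as Hq.
  assert (Hstep : 0 < h / 2 ^ S n) by (unfold Rdiv; apply Rmult_lt_0_compat; lra).
  rewrite (N_ext N (vsub _ _) (vscal (- (h / 2 ^ S n)) (fun c => IZR (zsub2 i j c)))).
  - destruct HN as [_ [Hs _]]. rewrite Hs, Rabs_Ropp, Rabs_pos_eq by lra.
    pose proof (Hsupp _ Hj). nra.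
  - intro c. unfold vsub, vscal, grid_point, zsub2. rewrite minus_IZR, mult_IZR.
    simpl. field. apply pow_nonzero. lra.
Qed.

Lemma level_estimate (x : Zs s -> X) (Hx : forall i, x i = f (fun c => h * IZR (i c)))
  (xs : nat -> Zs s -> X) (Hxs : bary_iterates d a x xs) :
  forall n j, d (xs n j) (f (grid_point h n j)) <= r * C * h * (1 - / 2 ^ n).
Proof.
  pose proof HX as [Hm _]. destruct Hxs as [H0 Hstep].
  induction n as [|n IH]; intro i.
  - rewrite H0, Hx. replace (grid_point h 0 i) with (fun c => h * IZR (i c)).
    + rewrite (d_refl d Hm). simpl. rewrite Rinv_1. lra.
    + apply functional_extensionality; intro c. unfold grid_point. simpl. field.
  - apply (barycenter_in_ball d HX a Ha (xs n) i); [apply Hstep|].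
    intros j Hj.
    eapply Rle_trans; [apply (d_tri d Hm _ (f (grid_point h n j)))|].
    pose proof (IH j). pose proof (grid_step_distance n i j Hj).
    replace (/ 2 ^ S n) with (/ 2 ^ n / 2) in * by (simpl; field; apply pow_nonzero; lra).
    unfold Rdiv in *. lra.
Qed.

Lemma grid_sampling_error (K : R) (HK : forall v B, 0 <= B ->
    (forall c, Rabs (v c) <= B) -> N v <= K * B) n j t :
  (forall c, Rabs (IZR (j c) / 2 ^ n - t c / h) < / 2 ^ n) ->
  d (f (grid_point h n j)) (f t) <= C * K * h * / 2 ^ n.
Proof.
  intros Hj. pose proof (inv_pow2_bounds n) as Hq.
  eapply Rle_trans; [apply Hf|].
  replace (C * K * h * / 2 ^ n) with (C * (K * (h * / 2 ^ n))) by ring.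
  apply Rmult_le_compat_l; [lra|]. apply HK; [nra|].
  intro c. unfold vsub, grid_point.
  replace (h * IZR (j c) / 2 ^ n - t c) with (h * (IZR (j c) / 2 ^ n - t c / h))
    by (field; split; [apply pow_nonzero|]; lra).
  rewrite Rabs_mult, Rabs_pos_eq by lra.
  apply Rmult_le_compat_l; [lra|]. apply Rlt_le, Hj.
Qed.
End SchemeEstimates.

(* Main theorem: for n large and j the rounding of 2^n t/h,
   d(S^oo x(t/h), f t) <= d(S^oo x(t/h), (S^n x)_j) + d((S^n x)_j, f(h j/2^n))
                          + d(f(h j/2^n), f t) <= eps/2 + rCh + eps/2. *)
Theorem mainTheorem8 (X : Type) (d : X -> X -> R) (s : nat) (N : Rs s -> R)
  (f : Rs s -> X) (C r h : R) (a : Zs s -> R)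
  (HX : hadamard_space d) (HN : is_norm N)
  (HC : 0 < C) (Hf : forall t u, d (f t) (f u) <= C * N (vsub t u))
  (Ha : is_mask a) (Hsupp : forall k, a k <> 0 -> N (fun c => IZR (k c)) <= r)
  (Hconv : scheme_convergent d a) (Hh : 0 < h)
  (x : Zs s -> X) (Hx : forall i, x i = f (fun c => h * IZR (i c)))
  (Hxb : bounded_data d x)
  (xs : nat -> Zs s -> X) (Hxs : bary_iterates d a x xs)
  (g : Rs s -> X) (Hg : is_limit_function d xs g) :
  forall t : Rs s, d (g (fun c => t c / h)) (f t) <= r * C * h.
Proof.
  intro t. pose proof HX as [Hm _].
  pose proof (mask_radius_nonneg N HN r a Ha Hsupp) as Hr.
  destruct (norm_dominated_by_sup N HN) as [K [HK0 HK]].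
  assert (HCKh : 0 <= C * K * h) by (apply Rmult_le_pos; [apply Rmult_le_pos|]; lra).
  apply Rle_plus_epsilon. intros eps Heps.
  destruct (limit_function_near_grid d Hm xs g Hg (fun c => t c / h) (eps / 2)) as [N0 HN0];
    [lra|].
  destruct (inv_pow2_small (eps / 2 / (C * K * h + 1))) as [N1 HN1];
    [apply Rdiv_lt_0_compat; lra|].
  set (n := Nat.max N0 N1).
  set (j := fun c => (up (2 ^ n * (t c / h)) - 1)%Z).
  assert (Hj : forall c, Rabs (IZR (j c) / 2 ^ n - t c / h) < / 2 ^ n)
    by (intro c; apply round_approx, pow_lt; lra).
  pose proof (HN0 n (Nat.le_max_l _ _) j Hj) as Hlimit.
  pose proof (level_estimate d HX N HN f C r h a HC Hf Ha Hsupp Hh x Hx xs Hxs n j) as Hlevel.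
  pose proof (grid_sampling_error d N f C h HC Hf Hh K HK n j t Hj) as Hsample.
  assert (Hsmall : C * K * h * / 2 ^ n <= eps / 2).
  { specialize (HN1 n (Nat.le_max_r _ _)). pose proof (inv_pow2_bounds n).
    apply (Rmult_lt_compat_r (C * K * h + 1)) in HN1; [|lra].
    replace (eps / 2 / (C * K * h + 1) * (C * K * h + 1)) with (eps / 2) in HN1
      by (field; lra).
    nra. }
  pose proof (d_tri d Hm (g (fun c => t c / h)) (xs n j) (f t)).
  pose proof (d_tri d Hm (xs n j) (f (grid_point h n j)) (f t)).
  assert (0 <= r * C * h * / 2 ^ n).
  { pose proof (inv_pow2_bounds n).
    repeat apply Rmult_le_pos; lra. }
  lra.
Qed.
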